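(* Let $r,s$ be real numbers with $s > 3\sqrt{3}\, r > 0$, and let $C_{r,s} \subset \mathbb{P}^2$ be the projective closure of the curve $s(xy - r^2) = x^2 y + x y^2$, i.e. $s(xyz - r^2 z^3) = x^2 y + x y^2$ in coordinates $[x,y,z]$; this is a nonsingular cubic. Equip its set of real points with the group law in which the identity is $[1,-1,0]$ and, for points $P,Q$, the sum $P+Q$ is the reflection in the line $y=x$ (i.e. $[x,y,z]\mapsto[y,x,z]$) of the third intersection point of $C_{r,s}$ with the line through $P$ and $Q$ (the tangent line if $P=Q$). Call a real point of $C_{r,s}$ a triangle point if it is an affine point $(x,y)$ with $x>0$ and $y>0$. Then the sum of two triangle points is not a triangle point, and the sum of a triangle point with a real point that is not a triangle point is a triangle point. Consequently, the sum of an odd number of triangle points is a triangle point, and the sum of an even number of triangle points is not a triangle point.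
   Context: The chord–tangent construction described (third intersection point followed by reflection in $y=x$, identity $[1,-1,0]$) defines the abelian group structure on the real points of $C_{r,s}$ used here. *)

From Stdlib Require Import Reals List.
Import ListNotations.
Open Scope R_scope.

(* Homogeneous coordinates [x,y,z] of a point of the real projective plane,
   represented by a (nonzero) vector of R^3. *)
Definition pt := (R * R * R)%type.

Definition Fcub (r s : R) (p : pt) : R :=
  let '(x, y, z) := p in s * (x * y * z - r ^ 2 * z ^ 3) - (x ^ 2 * y + x * y ^ 2).

Definition on_curve (r s : R) (p : pt) : Prop :=
  p <> (0, 0, 0) /\ Fcub r s p = 0.

Definition proj_eq (p q : pt) : Prop :=
  let '(x, y, z) := p in exists c, c <> 0 /\ q = (c * x, c * y, c * z).

Definition lin (l : pt) (p : pt) : R :=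
  let '(a, b, c) := l in let '(x, y, z) := p in a * x + b * y + c * z.

Definition indep (l m : pt) : Prop :=
  let '(a, b, c) := l in let '(a', b', c') := m in
  (b * c' - c * b', c * a' - a * c', a * b' - b * a') <> (0, 0, 0).

Definition quad (q : R * R * R * R * R * R) (p : pt) : R :=
  let '(a, b, c, d, e, f) := q in let '(x, y, z) := p in
  a * x * x + b * y * y + c * z * z + d * x * y + e * x * z + f * y * z.

(* P, Q, R are the three intersection points (with multiplicity) of C_{r,s}
   with a line {l = 0}: the restriction of F to the line equals a product of
   three linear forms vanishing respectively at P, Q, R (none of them vanishing
   identically on the line), i.e. F = lP lQ lR modulo l.  When P = Q this
   forces the line to be tangent at P. *)
Definition line_section (r s : R) (P Q Rp : pt) : Prop :=
  exists (l lP lQ lR : pt) (q : R * R * R * R * R * R),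
    lin l P = 0 /\ lin l Q = 0 /\ lin l Rp = 0 /\
    lin lP P = 0 /\ lin lQ Q = 0 /\ lin lR Rp = 0 /\
    indep l lP /\ indep l lQ /\ indep l lR /\
    forall p : pt, Fcub r s p = lin lP p * lin lQ p * lin lR p + lin l p * quad q p.

Definition swapxy (p : pt) : pt := let '(x, y, z) := p in (y, x, z).

Definition add_rel (r s : R) (P Q S : pt) : Prop :=
  on_curve r s P /\ on_curve r s Q /\
  exists Rp, on_curve r s Rp /\ line_section r s P Q Rp /\ proj_eq (swapxy Rp) S.

Inductive sum_rel (r s : R) : list pt -> pt -> Prop :=
  | sum_nil : forall c, c <> 0 -> sum_rel r s [] (c, - c, 0)
  | sum_cons : forall P l T S, sum_rel r s l T -> add_rel r s P T S ->
      sum_rel r s (P :: l) S.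

Definition triangle_pt (p : pt) : Prop :=
  let '(x, y, z) := p in z <> 0 /\ 0 < x / z /\ 0 < y / z.

From Stdlib Require Import Reals List Lra Classical.
Import ListNotations.
Open Scope R_scope.

(* In the affine chart z = 1 the cubic form is F(a, b, 1) = ab(s - a - b) - s r^2, which is
   negative on the boundary of the triangle a, b >= 0, a + b <= s; hence every triangle point
   lies in its interior.  A line through a triangle point P meets the closed triangle in a
   segment with F < 0 at both ends, and along the line F is the product of three affine
   factors vanishing at P, Q and the third point R.  A factor changes sign across the segment
   exactly when its root is a triangle point, and an even number of factors change sign; P's
   factor does, so exactly one of Q and R is a triangle point.  Reflection in y = x preserves
   triangle points, and the statement about sums follows by induction. *)

Section AffineChart.
Variables r s : R.
Hypotheses (r_pos : 0 < r) (s_pos : 0 < s).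

Lemma Fcub_affine a b : Fcub r s (a, b, 1) = a * b * (s - (a + b)) - s * r ^ 2.
Proof. unfold Fcub; ring. Qed.

Lemma Fcub_affine_neg a b :
  0 <= a -> 0 <= b -> a * b = 0 \/ s <= a + b -> Fcub r s (a, b, 1) < 0.
Proof.
  intros Ha Hb Hedge; rewrite Fcub_affine.
  assert (0 < s * r ^ 2) by (apply Rmult_lt_0_compat; nra).
  destruct Hedge as [Hab | Hab]; [rewrite Hab | assert (0 <= a * b)]; nra.
Qed.

Lemma Fcub_affine_root_in_triangle a b :
  0 <= a -> 0 <= b -> Fcub r s (a, b, 1) = 0 -> 0 < a /\ 0 < b /\ a + b < s.
Proof.
  intros Ha Hb Hroot; rewrite Fcub_affine in Hroot.
  assert (0 < s * r ^ 2) by (apply Rmult_lt_0_compat; nra).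
  assert (Hpos : 0 < a * b * (s - (a + b))) by lra.
  assert (0 <= a * b) by nra.
  assert (0 < a * b /\ 0 < s - (a + b)) as [Hab Hs] by (split; nra).
  repeat split; nra.
Qed.

End AffineChart.

(* An affine function [t => c + m * t] is encoded by the pair [(c, m)]. *)
Lemma affine_exit_time (fs : list (R * R)) :
  Forall (fun f => 0 < fst f) fs -> Exists (fun f => snd f < 0) fs ->
  exists h, 0 < h /\
    (forall t, 0 <= t <= h -> Forall (fun f => 0 <= fst f + snd f * t) fs) /\
    Exists (fun f => fst f + snd f * h = 0) fs /\
    (forall t, 0 <= t -> Forall (fun f => 0 < fst f + snd f * t) fs -> t < h).
Proof.
  induction fs as [|[c m] fs IH]; intros Hpos Hneg; [inversion Hneg|].
  rewrite Forall_cons_iff in Hpos; destruct Hpos as [Hc Hpos]; simpl in Hc.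
  destruct (Rlt_le_dec m 0) as [Hm | Hm].
  - set (h0 := c / - m).
    assert (Hh0 : c + m * h0 = 0) by (unfold h0; field; lra).
    assert (Hh0_pos : 0 < h0) by (unfold h0; apply Rdiv_lt_0_compat; lra).
    destruct (Exists_dec (fun f => snd f < 0) fs (fun f => Rlt_dec (snd f) 0)) as [Hn | Hn].
    + destruct (IH Hpos Hn) as (h & Hh & Hnn & Hzero & Hexit).
      exists (Rmin h0 h); split; [now apply Rmin_glb_lt|split; [|split]].
      * intros t Ht; pose proof (Rmin_l h0 h); pose proof (Rmin_r h0 h).
        constructor; [simpl; nra | apply Hnn; lra].
      * apply Exists_cons; unfold Rmin; destruct (Rle_dec h0 h); [left | right]; auto.
      * intros t Ht Hall; rewrite Forall_cons_iff in Hall; destruct Hall as [Ht0 Hall].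
        simpl in Ht0; apply Rmin_glb_lt; [nra | now apply Hexit].
    + apply Forall_Exists_neg in Hn.
      exists h0; split; [exact Hh0_pos | split; [|split]].
      * intros t Ht; constructor; [simpl; nra|].
        refine (Forall_impl _ _ (Forall_and Hpos Hn)); intros [c' m'] [Hc' Hm']; simpl in *; nra.
      * now apply Exists_cons; left.
      * intros t Ht Hall; rewrite Forall_cons_iff in Hall; destruct Hall as [Ht0 _].
        simpl in Ht0; nra.
  - rewrite Exists_cons in Hneg; destruct Hneg as [Hneg | Hneg]; [simpl in Hneg; lra|].
    destruct (IH Hpos Hneg) as (h & Hh & Hnn & Hzero & Hexit).
    exists h; split; [exact Hh | split; [|split]].
    + intros t Ht; constructor; [simpl; nra | auto].
    + now apply Exists_cons; right.
    + intros t Ht Hall; apply Forall_cons_iff in Hall; apply Hexit; tauto.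
Qed.

Lemma ray_exits_triangle s a0 b0 d1 d2 :
  0 < a0 -> 0 < b0 -> a0 + b0 < s -> (d1, d2) <> (0, 0) ->
  exists h, 0 < h /\
    (forall t, 0 <= t <= h -> 0 <= a0 + t * d1 /\ 0 <= b0 + t * d2) /\
    ((a0 + h * d1) * (b0 + h * d2) = 0 \/ s <= (a0 + h * d1) + (b0 + h * d2)) /\
    (forall t, 0 <= t -> 0 < a0 + t * d1 -> 0 < b0 + t * d2 ->
       (a0 + t * d1) + (b0 + t * d2) < s -> t < h).
Proof.
  intros Ha Hb Hs Hd.
  (* the three edges of the triangle, restricted to the ray; their slopes sum to 0 *)
  destruct (affine_exit_time [(a0, d1); (b0, d2); (s - (a0 + b0), - (d1 + d2))])
    as (h & Hh & Hnn & Hzero & Hexit).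
  - repeat constructor; simpl; lra.
  - destruct (Rlt_le_dec d1 0); [now constructor|].
    destruct (Rlt_le_dec d2 0); [now do 2 constructor|].
    do 2 constructor; constructor; simpl.
    destruct (Req_dec d1 0), (Req_dec d2 0); [subst; contradiction|lra..].
  - exists h; split; [exact Hh | split; [|split]].
    + intros t Ht; specialize (Hnn t Ht).
      repeat rewrite Forall_cons_iff in Hnn; simpl in Hnn; lra.
    + repeat rewrite Exists_cons in Hzero; simpl in Hzero.
      destruct Hzero as [Hz | [Hz | [Hz | Hz]]]; [left | left | right; lra | inversion Hz].
      * replace (a0 + h * d1) with 0 by lra; ring.
      * replace (b0 + h * d2) with 0 by lra; ring.
    + intros t Ht HA HB HS; apply Hexit; [exact Ht|].
      repeat constructor; simpl; lra.
Qed.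

Lemma line_meets_triangle s a0 b0 d1 d2 :
  0 < a0 -> 0 < b0 -> a0 + b0 < s -> (d1, d2) <> (0, 0) ->
  exists lo hi, lo < hi /\
    (forall t, lo <= t <= hi -> 0 <= a0 + t * d1 /\ 0 <= b0 + t * d2) /\
    (forall t, t = lo \/ t = hi ->
       (a0 + t * d1) * (b0 + t * d2) = 0 \/ s <= (a0 + t * d1) + (b0 + t * d2)) /\
    (forall t, 0 < a0 + t * d1 -> 0 < b0 + t * d2 ->
       (a0 + t * d1) + (b0 + t * d2) < s -> lo < t < hi).
Proof.
  intros Ha Hb Hs Hd.
  assert (Hd' : (- d1, - d2) <> (0, 0)).
  { intro E; injection E as E1 E2; apply Hd; f_equal; lra. }
  destruct (ray_exits_triangle s a0 b0 d1 d2 Ha Hb Hs Hd) as (hi & Hhi & Hnn & Hedge & Hexit).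
  destruct (ray_exits_triangle s a0 b0 (- d1) (- d2) Ha Hb Hs Hd')
    as (h' & Hh' & Hnn' & Hedge' & Hexit').
  assert (Hrev : forall t, a0 + t * d1 = a0 + - t * - d1 /\ b0 + t * d2 = b0 + - t * - d2)
    by (intro; split; ring).
  exists (- h'), hi; split; [lra | split; [|split]].
  - intros t Ht; destruct (Rle_lt_dec 0 t); [apply Hnn; lra|].
    rewrite (proj1 (Hrev t)), (proj2 (Hrev t)); apply Hnn'; lra.
  - intros t [-> | ->]; [|exact Hedge].
    rewrite (proj1 (Hrev _)), (proj2 (Hrev _)), !Ropp_involutive; exact Hedge'.
  - intros t HA HB HS; destruct (Rle_lt_dec 0 t).
    + pose proof (Hexit t r HA HB HS); lra.
    + rewrite (proj1 (Hrev t)), (proj2 (Hrev t)) in *.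
      pose proof (Hexit' (- t) ltac:(lra) HA HB HS); lra.
Qed.

Lemma affine_sign_change c m lo hi :
  lo < hi -> c <> 0 \/ m <> 0 ->
  ((c + m * lo) * (c + m * hi) < 0 <-> exists t, lo < t < hi /\ c + m * t = 0).
Proof.
  intros Hlh Hcm; split.
  - intro Hneg.
    assert (Hm : m <> 0) by (intro Z; rewrite Z in Hneg; nra).
    exists (- c / m); split; [|field; exact Hm].
    replace ((c + m * lo) * (c + m * hi)) with (m * m * ((lo - - c / m) * (hi - - c / m)))
      in Hneg by (field; exact Hm).
    assert (0 < m * m) by nra.
    assert ((lo - - c / m) * (hi - - c / m) < 0) by nra.
    split; nra.
  - intros (t & Ht & Hroot).
    assert (Hm : m <> 0) by (intro Z; subst m; destruct Hcm; lra).
    replace c with (- (m * t)) by lra.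
    replace ((- (m * t) + m * lo) * (- (m * t) + m * hi)) with (m * m * ((lo - t) * (hi - t)))
      by ring.
    assert (0 < m * m) by nra.
    assert ((lo - t) * (hi - t) < 0) by nra.
    nra.
Qed.

Lemma triangle_pt_affine a b : triangle_pt (a, b, 1) <-> 0 < a /\ 0 < b.
Proof. unfold triangle_pt; rewrite !Rdiv_1_r; split; [tauto | split; [exact R1_neq_R0 | tauto]]. Qed.

Section LineThroughAffinePoint.
Variables a0 b0 l1 l2 l3 : R.
Hypothesis l_through : lin (l1, l2, l3) (a0, b0, 1) = 0.
Hypothesis l_affine : l1 <> 0 \/ l2 <> 0.

Let along (t : R) : pt := (a0 + t * l2, b0 + t * - l1, 1).

Lemma lin_along n1 n2 n3 t :
  lin (n1, n2, n3) (along t) = lin (n1, n2, n3) (a0, b0, 1) + (n1 * l2 - n2 * l1) * t.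
Proof. unfold lin, along; ring. Qed.

Lemma line_point_param x1 x2 x3 :
  lin (l1, l2, l3) (x1, x2, x3) = 0 ->
  exists tau, x1 = x3 * a0 + tau * l2 /\ x2 = x3 * b0 + tau * - l1.
Proof.
  unfold lin in *; intro Hx.
  assert (E : l1 * (x1 - x3 * a0) + l2 * (x2 - x3 * b0) = 0) by nra.
  destruct (Req_dec l2 0) as [Z | Z].
  - subst l2; destruct l_affine as [Hl1 | Hl2]; [|lra].
    exists ((x3 * b0 - x2) / l1); split; [|field; exact Hl1].
    assert (x1 - x3 * a0 = 0); [|lra].
    apply (Rmult_eq_reg_l l1); [lra | exact Hl1].
  - exists ((x1 - x3 * a0) / l2); split; [field; exact Z|].
    apply (Rmult_eq_reg_l l2); [|exact Z]; field_simplify; [nra | exact Z].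
Qed.

Lemma indep_lin_along_nonzero n1 n2 n3 :
  indep (l1, l2, l3) (n1, n2, n3) ->
  lin (n1, n2, n3) (a0, b0, 1) <> 0 \/ n1 * l2 - n2 * l1 <> 0.
Proof.
  unfold indep, lin in *; intro Hind.
  destruct (Req_dec (n1 * a0 + n2 * b0 + n3 * 1) 0) as [Hc | Hc]; [right | left; exact Hc].
  intro Hm; apply Hind.
  replace l3 with (- (l1 * a0 + l2 * b0)) by lra.
  replace n3 with (- (n1 * a0 + n2 * b0)) by lra.
  f_equal; [f_equal|].
  - transitivity (- a0 * (n1 * l2 - n2 * l1)); [ring | rewrite Hm; ring].
  - transitivity (- b0 * (n1 * l2 - n2 * l1)); [ring | rewrite Hm; ring].
  - lra.
Qed.

Lemma triangle_pt_on_line_iff n1 n2 n3 x1 x2 x3 :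
  lin (l1, l2, l3) (x1, x2, x3) = 0 -> lin (n1, n2, n3) (x1, x2, x3) = 0 ->
  indep (l1, l2, l3) (n1, n2, n3) -> (x1, x2, x3) <> (0, 0, 0) ->
  (triangle_pt (x1, x2, x3) <->
   exists t, lin (n1, n2, n3) (along t) = 0 /\ triangle_pt (along t)).
Proof.
  intros Hl Hn Hind HX.
  destruct (line_point_param x1 x2 x3 Hl) as (tau & -> & ->).
  set (c := lin (n1, n2, n3) (a0, b0, 1)); set (m := n1 * l2 - n2 * l1).
  assert (Hlin : x3 * c + tau * m = 0) by (rewrite <- Hn; unfold c, m, lin; ring).
  assert (Hscale : forall t, x3 <> 0 -> tau = x3 * t ->
    triangle_pt (x3 * a0 + tau * l2, x3 * b0 + tau * - l1, x3) <-> triangle_pt (along t)).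
  { intros t Hx3 ->; unfold along; rewrite triangle_pt_affine; unfold triangle_pt.
    replace ((x3 * a0 + x3 * t * l2) / x3) with (a0 + t * l2) by (field; exact Hx3).
    replace ((x3 * b0 + x3 * t * - l1) / x3) with (b0 + t * - l1) by (field; exact Hx3).
    tauto. }
  split.
  - intros Htri; assert (Hx3 : x3 <> 0) by apply Htri.
    exists (tau / x3); split.
    + rewrite lin_along; fold c m; apply (Rmult_eq_reg_l x3); [|exact Hx3].
      field_simplify; [lra | exact Hx3].
    + apply (Hscale (tau / x3) Hx3); [field; exact Hx3 | exact Htri].
  - intros (t & Hroot & Htri); rewrite lin_along in Hroot; fold c m in Hroot.
    assert (Hm : m <> 0).
    { intro Z; rewrite Z in Hroot.
      destruct (indep_lin_along_nonzero n1 n2 n3 Hind) as [Hc | Hm]; [fold c in Hc; lra | auto]. }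
    assert (Htau : tau = x3 * t) by (apply (Rmult_eq_reg_l m); [nra | exact Hm]).
    assert (Hx3 : x3 <> 0).
    { intro Z; apply HX; rewrite Htau, Z; f_equal; try f_equal; ring. }
    apply (Hscale t Hx3 Htau); exact Htri.
Qed.

Variables r s lo hi : R.
Hypotheses (r_pos : 0 < r) (s_pos : 0 < s) (lo_lt_hi : lo < hi).
Hypothesis segment_in_quadrant :
  forall t, lo <= t <= hi -> 0 <= a0 + t * l2 /\ 0 <= b0 + t * - l1.
Hypothesis triangle_in_segment :
  forall t, 0 < a0 + t * l2 -> 0 < b0 + t * - l1 -> (a0 + t * l2) + (b0 + t * - l1) < s ->
  lo < t < hi.

Lemma sign_change_iff_triangle_pt n1 n2 n3 x1 x2 x3 :
  (forall t, lin (n1, n2, n3) (along t) = 0 -> Fcub r s (along t) = 0) ->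
  lin (l1, l2, l3) (x1, x2, x3) = 0 -> lin (n1, n2, n3) (x1, x2, x3) = 0 ->
  indep (l1, l2, l3) (n1, n2, n3) -> (x1, x2, x3) <> (0, 0, 0) ->
  (lin (n1, n2, n3) (along lo) * lin (n1, n2, n3) (along hi) < 0 <-> triangle_pt (x1, x2, x3)).
Proof.
  intros Hfactor Hl Hn Hind HX.
  rewrite (triangle_pt_on_line_iff n1 n2 n3 x1 x2 x3 Hl Hn Hind HX), !lin_along.
  rewrite affine_sign_change by (exact lo_lt_hi || exact (indep_lin_along_nonzero n1 n2 n3 Hind)).
  split.
  - intros (t & Ht & Hroot); rewrite <- lin_along in Hroot.
    pose proof (Hfactor t Hroot) as HF; unfold along in HF.
    destruct (segment_in_quadrant t ltac:(lra)) as [Ha Hb].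
    destruct (Fcub_affine_root_in_triangle r s r_pos s_pos _ _ Ha Hb HF) as (Ha' & Hb' & _).
    exists t; split; [exact Hroot | now apply triangle_pt_affine].
  - intros (t & Hroot & Htri).
    pose proof (Hfactor t Hroot) as HF; unfold along in HF, Htri.
    apply triangle_pt_affine in Htri as [Ha Hb].
    destruct (Fcub_affine_root_in_triangle r s r_pos s_pos _ _ (Rlt_le _ _ Ha) (Rlt_le _ _ Hb) HF)
      as (_ & _ & Hs).
    exists t; split; [now apply triangle_in_segment | now rewrite <- lin_along].
Qed.

End LineThroughAffinePoint.

Lemma neg_products_parity u v w u' v' w' :
  u * v * w < 0 -> u' * v' * w' < 0 -> u * u' < 0 -> (v * v' < 0 <-> ~ w * w' < 0).
Proof.
  intros H H' Hu.
  assert (0 < (u * u') * ((v * v') * (w * w'))).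
  { replace ((u * u') * ((v * v') * (w * w'))) with ((- (u * v * w)) * (- (u' * v' * w')))
      by ring.
    nra. }
  assert ((v * v') * (w * w') < 0) by nra.
  split; intro; nra.
Qed.

Lemma lin_dehomogenize n p1 p2 p3 :
  p3 <> 0 -> lin n (p1, p2, p3) = 0 -> lin n (p1 / p3, p2 / p3, 1) = 0.
Proof.
  destruct n as [[n1 n2] n3]; unfold lin; intros Hp3 Hn.
  replace (n1 * (p1 / p3) + n2 * (p2 / p3) + n3 * 1) with ((n1 * p1 + n2 * p2 + n3 * p3) / p3)
    by (field; exact Hp3).
  rewrite Hn; unfold Rdiv; ring.
Qed.

Lemma line_section_dehomogenize r s p1 p2 p3 Q R :
  p3 <> 0 -> line_section r s (p1, p2, p3) Q R -> line_section r s (p1 / p3, p2 / p3, 1) Q R.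
Proof.
  intros Hp3 (l & lP & lQ & lR & q & HlP & HlQ & HlR & HPP & HQQ & HRR & HindP & HindQ &
               HindR & Hfac).
  exists l, lP, lQ, lR, q.
  repeat split; auto using lin_dehomogenize.
Qed.

Lemma line_section_parity_affine r s a0 b0 Q R :
  0 < r -> 0 < s -> 0 < a0 -> 0 < b0 -> Q <> (0, 0, 0) -> R <> (0, 0, 0) ->
  line_section r s (a0, b0, 1) Q R -> (triangle_pt Q <-> ~ triangle_pt R).
Proof.
  intros Hr Hs Ha0 Hb0 HQ HR (l & lP & lQ & lR & q & Hl0 & HlQ & HlR & HPP & HQQ & HRR &
                              HindP & HindQ & HindR & Hfac).
  destruct l as [[l1 l2] l3].
  assert (Hl12 : l1 <> 0 \/ l2 <> 0).
  { destruct (Req_dec l1 0), (Req_dec l2 0); auto; subst; exfalso.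
    unfold lin in Hl0; assert (l3 = 0) by lra; subst l3.
    destruct lP as [[u1 u2] u3]; apply HindP; f_equal; try f_equal; ring. }
  assert (Hfac_line : forall t, Fcub r s (a0 + t * l2, b0 + t * - l1, 1) =
            lin lP (a0 + t * l2, b0 + t * - l1, 1) * lin lQ (a0 + t * l2, b0 + t * - l1, 1) *
            lin lR (a0 + t * l2, b0 + t * - l1, 1)).
  { intro t; rewrite Hfac, (lin_along a0 b0 l1 l2 l1 l2 l3), Hl0; ring. }
  assert (HF0 : Fcub r s (a0, b0, 1) = 0) by (rewrite Hfac, HPP, Hl0; ring).
  destruct (Fcub_affine_root_in_triangle r s Hr Hs a0 b0 (Rlt_le _ _ Ha0) (Rlt_le _ _ Hb0) HF0)
    as (_ & _ & Hs0).
  destruct (line_meets_triangle s a0 b0 l2 (- l1) Ha0 Hb0 Hs0)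
    as (lo & hi & Hlh & Hseg & Hedge & Htri).
  { intro E; injection E as E1 E2; destruct Hl12; lra. }
  assert (Hend : forall t, t = lo \/ t = hi -> Fcub r s (a0 + t * l2, b0 + t * - l1, 1) < 0).
  { intros t Ht; destruct (Hseg t) as [Ha Hb]; [destruct Ht; lra|].
    exact (Fcub_affine_neg r s Hr Hs _ _ Ha Hb (Hedge t Ht)). }
  pose proof (Hend lo (or_introl eq_refl)) as Hlo; pose proof (Hend hi (or_intror eq_refl)) as Hhi.
  rewrite Hfac_line in Hlo, Hhi.
  assert (Hfactor : forall n, n = lP \/ n = lQ \/ n = lR -> forall t,
    lin n (a0 + t * l2, b0 + t * - l1, 1) = 0 -> Fcub r s (a0 + t * l2, b0 + t * - l1, 1) = 0).
  { intros n Hn t Hz; rewrite Hfac_line; destruct Hn as [-> | [-> | ->]]; rewrite Hz; ring. }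
  destruct lP as [[u1 u2] u3], lQ as [[v1 v2] v3], lR as [[w1 w2] w3].
  destruct Q as [[q1 q2] q3], R as [[x1 x2] x3].
  pose proof (sign_change_iff_triangle_pt a0 b0 l1 l2 l3 Hl0 Hl12 r s lo hi Hr Hs Hlh Hseg Htri)
    as Hsign; cbv beta in Hsign.
  rewrite <- (Hsign v1 v2 v3 q1 q2 q3), <- (Hsign w1 w2 w3 x1 x2 x3);
    try (apply Hfactor; auto); auto.
  apply (neg_products_parity _ _ _ _ _ _ Hlo Hhi).
  apply (Hsign u1 u2 u3 a0 b0 1); try (apply Hfactor; auto); auto.
  - intro E; injection E as _ _ E; lra.
  - now apply triangle_pt_affine.
Qed.

Lemma line_section_parity r s P Q R :
  0 < r -> 0 < s -> triangle_pt P -> Q <> (0, 0, 0) -> R <> (0, 0, 0) ->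
  line_section r s P Q R -> (triangle_pt Q <-> ~ triangle_pt R).
Proof.
  destruct P as [[p1 p2] p3]; intros Hr Hs (Hp3 & Ha0 & Hb0) HQ HR Hsec.
  exact (line_section_parity_affine r s _ _ Q R Hr Hs Ha0 Hb0 HQ HR
           (line_section_dehomogenize r s p1 p2 p3 Q R Hp3 Hsec)).
Qed.

Lemma triangle_pt_proj_eq P Q : proj_eq P Q -> (triangle_pt Q <-> triangle_pt P).
Proof.
  destruct P as [[x y] z]; intros (c & Hc & ->); unfold triangle_pt.
  rewrite !Rdiv_mult_l_l by exact Hc.
  split; intros (Hz & Hx & Hy); (split; [|auto]).
  - intro Z; apply Hz; rewrite Z; ring.
  - now apply Rmult_integral_contrapositive_currified.
Qed.

Lemma triangle_pt_swapxy P : triangle_pt (swapxy P) <-> triangle_pt P.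
Proof. destruct P as [[x y] z]; unfold triangle_pt, swapxy; tauto. Qed.

Lemma add_rel_triangle_parity r s P Q S :
  0 < r -> 0 < s -> triangle_pt P -> add_rel r s P Q S -> (triangle_pt Q <-> ~ triangle_pt S).
Proof.
  intros Hr Hs HP (_ & [HQ _] & R & [HR _] & Hsec & Hsum).
  rewrite (triangle_pt_proj_eq _ _ Hsum), triangle_pt_swapxy.
  exact (line_section_parity r s P Q R Hr Hs HP HQ HR Hsec).
Qed.

Lemma sum_rel_triangle_parity r s l S :
  0 < r -> 0 < s -> Forall triangle_pt l -> sum_rel r s l S ->
  (triangle_pt S <-> Nat.odd (length l) = true).
Proof.
  intros Hr Hs Hl Hsum; induction Hsum as [c Hc | P l T S _ IH Hadd].
  - unfold triangle_pt; simpl; split; [intros [Hz _]; lra | discriminate].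
  - apply Forall_cons_iff in Hl as [HP Hl].
    pose proof (add_rel_triangle_parity r s P T S Hr Hs HP Hadd) as HTS.
    assert (HST : triangle_pt S <-> ~ triangle_pt T) by (split; [tauto | intro; apply NNPP; tauto]).
    rewrite HST, (IH Hl); simpl length; rewrite Nat.odd_succ, <- Nat.negb_odd.
    destruct (Nat.odd (length l)); simpl; split; auto; discriminate.
Qed.

Theorem theorem2 (r s : R) (hr : 0 < 3 * sqrt 3 * r) (hs : 3 * sqrt 3 * r < s) :
  (forall P Q S : pt, on_curve r s P -> triangle_pt P -> on_curve r s Q -> triangle_pt Q ->
     add_rel r s P Q S -> ~ triangle_pt S) /\
  (forall P Q S : pt, on_curve r s P -> triangle_pt P -> on_curve r s Q -> ~ triangle_pt Q ->
     add_rel r s P Q S -> triangle_pt S) /\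
  (forall (l : list pt) (S : pt), Forall (fun P => on_curve r s P /\ triangle_pt P) l ->
     sum_rel r s l S -> (triangle_pt S <-> Nat.odd (length l) = true)).
Proof.
  assert (Hsqrt3 : 0 < 3 * sqrt 3) by (pose proof (sqrt_lt_R0 3 ltac:(lra)); lra).
  assert (Hr : 0 < r) by nra.
  assert (Hs : 0 < s) by lra.
  split; [|split].
  - intros P Q S _ HP _ HQ Hadd.
    now apply (add_rel_triangle_parity r s P Q S Hr Hs HP Hadd).
  - intros P Q S _ HP _ HQ Hadd.
    apply NNPP; intro HS; apply HQ.
    now apply (add_rel_triangle_parity r s P Q S Hr Hs HP Hadd).
  - intros l S Hl.
    apply sum_rel_triangle_parity; auto.
    apply (Forall_impl _ (fun P HP => proj2 HP) Hl).
Qed.
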